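(* Suppose Assumptions (A1) and (A2) below hold, and let $\{\boldsymbol{x}_{i,t}\}$ be the decision sequence generated by Algorithm DOMFW (described in the context) with parameters $0<\alpha_t\le 1$ and a nondecreasing integer sequence $\{K_t\}$. Then for any $T\ge 2$ and $K_t\ge 2$ (for all $t$), $$\sum_{t=1}^T\sum_{i=1}^n \|\boldsymbol{x}_{i,t}-\boldsymbol{x}_{avg,t}\| \le \frac{n\Gamma_1}{1-\sigma_1^{K_1}}\sum_{i=1}^n\|\boldsymbol{x}_{i,1}\| + \sum_{i=1}^n\|\boldsymbol{x}_{i,1}-\boldsymbol{x}_{avg,1}\| + \left(\frac{n^2M\Gamma_1}{\sigma_1(1-\sigma_1)(1-\sigma_1^{K_1})}+2nM\right)\sum_{t=1}^T\alpha_t .$$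
   Context: Network: $n$ agents, $\mathcal{V}=\{1,\dots,n\}$, time-varying directed graphs $\mathcal{G}_t=(\mathcal{V},\mathcal{E}_t,A_t)$ with weight matrices $A_t\in\mathbb{R}^{n\times n}$; $\mathcal{N}_i^{in}(t)=\{j:(j,i)\in\mathcal{E}_t\}\cup\{i\}$, and $[A_t]_{ij}>0$ if $j\in\mathcal{N}_i^{in}(t)$, $[A_t]_{ij}=0$ otherwise. Assumption (A1): (a) there is $\zeta>0$ with $[A_t]_{ij}>\zeta$ whenever $[A_t]_{ij}>0$; (b) $\mathcal{G}_t$ is strongly connected for all $t$; (c) each $A_t$ is doubly stochastic. Assumption (A2): $\boldsymbol{X}\subset\mathbb{R}^d$ is convex compact with $\|\boldsymbol{x}-\boldsymbol{z}\|\le M$ for all $\boldsymbol{x},\boldsymbol{z}\in\boldsymbol{X}$. Each agent $i$ has at round $t$ a convex differentiable loss $f_{i,t}$ on $\boldsymbol{X}$. Algorithm DOMFW: initial points $\boldsymbol{x}_{i,1}\in\boldsymbol{X}$. For $t=1,\dots,T$: set $\boldsymbol{x}_{i,t}^1=\boldsymbol{x}_{i,t}$; for $k=1,\dots,K_t$, each agent $i$ computes $\hat{\boldsymbol{x}}_{i,t}^k=\sum_{j}[A_t]_{ij}\boldsymbol{x}_{j,t}^k$; $\overline{\nabla}f_{i,t}^1=\nabla f_{i,t}(\hat{\boldsymbol{x}}_{i,t}^1)$ and for $k\ge2$, $\overline{\nabla}f_{i,t}^k=\widehat{\nabla}f_{i,t}^{k-1}+\nabla f_{i,t}(\hat{\boldsymbol{x}}_{i,t}^k)-\nabla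 f_{i,t}(\hat{\boldsymbol{x}}_{i,t}^{k-1})$; $\widehat{\nabla}f_{i,t}^k=\sum_j[A_t]_{ij}\overline{\nabla}f_{j,t}^k$; $\boldsymbol{v}_{i,t}^k\in\arg\min_{\boldsymbol{x}\in\boldsymbol{X}}\langle\boldsymbol{x},\widehat{\nabla}f_{i,t}^k\rangle$; $\boldsymbol{x}_{i,t}^{k+1}=\hat{\boldsymbol{x}}_{i,t}^k+\alpha_t(\boldsymbol{v}_{i,t}^k-\hat{\boldsymbol{x}}_{i,t}^k)$. Then $\boldsymbol{x}_{i,t+1}=\boldsymbol{x}_{i,t}^{K_t+1}$. Notation: $\boldsymbol{x}_{avg,t}=\frac1n\sum_i\boldsymbol{x}_{i,t}$; $\sigma_1=1-\frac{\zeta}{4n^2}$, $\Gamma_1=\left(1-\frac{\zeta}{4n^2}\right)^{-1}$. *)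

From HB Require Import structures.
From mathcomp Require Import all_boot all_order all_algebra.
From mathcomp Require Import all_classical all_reals all_analysis.
Set Implicit Arguments. Unset Strict Implicit. Unset Printing Implicit Defensive.
Import Order.TTheory GRing.Theory Num.Theory.
Import numFieldNormedType.Exports.
Local Open Scope classical_set_scope.
Local Open Scope ring_scope.

Definition dotv {R : realType} {d : nat} (u v : 'rV[R]_d) : R :=
  \sum_(k < d) u ord0 k * v ord0 k.
Definition enorm {R : realType} {d : nat} (u : 'rV[R]_d) : R :=
  Num.sqrt (dotv u u).

Definition convex_set {R : realType} {d : nat} (X : set 'rV[R]_d) : Prop :=
  forall x z, X x -> X z -> forall l : R, 0 <= l <= 1 ->
    X ((1 - l) *: x + l *: z).

Definition convex_fun_on {R : realType} {d : nat} (X : set 'rV[R]_d)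
  (f : 'rV[R]_d -> R) : Prop :=
  forall x z, X x -> X z -> forall l : R, 0 <= l <= 1 ->
    f ((1 - l) *: x + l *: z) <= (1 - l) * f x + l * f z.

Definition gradient_on {R : realType} {d : nat} (X : set 'rV[R]_d)
  (f : 'rV[R]_d -> R) (g : 'rV[R]_d -> 'rV[R]_d) : Prop :=
  forall x, X x -> differentiable f x /\ forall v, 'D_v f x = dotv (g x) v.

Definition assumption_A1 {R : realType} (n : nat) (A : nat -> 'M[R]_n) (zeta : R) : Prop :=
  0 < zeta /\
  forall t, (1 <= t)%N ->
    (forall i j, 0 <= A t i j) /\
    (forall i, 0 < A t i i) /\
    (forall i j, 0 < A t i j -> zeta < A t i j) /\
    (* (b) G_t strongly connected, with edge (j,i) iff [A_t]_ij > 0 *)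
    (forall i j, connect (fun a b : 'I_n => 0 < A t b a) i j) /\
    (forall i, \sum_j A t i j = 1) /\
    (forall j, \sum_i A t i j = 1).

Definition assumption_A2 {R : realType} {d : nat} (X : set 'rV[R]_d) (M : R) : Prop :=
  convex_set X /\ compact X /\
  forall x z, X x -> X z -> enorm (x - z) <= M.

(* The trajectory of Algorithm DOMFW: x t i = x_{i,t}, xs t k i = x_{i,t}^k,
   xh t k i = hat x_{i,t}^k, gb t k i = bar grad f_{i,t}^k,
   gh t k i = hat grad f_{i,t}^k, v t k i = v_{i,t}^k. *)
Definition DOMFW_run {R : realType} {n d : nat} (X : set 'rV[R]_d)
  (A : nat -> 'M[R]_n) (grad : nat -> 'I_n -> 'rV[R]_d -> 'rV[R]_d)
  (alpha : nat -> R) (K : nat -> nat)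
  (x : nat -> 'I_n -> 'rV[R]_d)
  (xs xh gb gh v : nat -> nat -> 'I_n -> 'rV[R]_d) : Prop :=
  (forall i, X (x 1%N i)) /\
  forall t, (1 <= t)%N ->
    (forall i, xs t 1%N i = x t i) /\
    (forall k i, (1 <= k <= K t)%N ->
       xh t k i = \sum_j A t i j *: xs t k j) /\
    (forall i, gb t 1%N i = grad t i (xh t 1%N i)) /\
    (forall k i, (2 <= k <= K t)%N ->
       gb t k i = gh t k.-1 i + grad t i (xh t k i) - grad t i (xh t k.-1 i)) /\
    (forall k i, (1 <= k <= K t)%N ->
       gh t k i = \sum_j A t i j *: gb t k j) /\
    (forall k i, (1 <= k <= K t)%N ->
       X (v t k i) /\ forall y, X y -> dotv (v t k i) (gh t k i) <= dotv y (gh t k i)) /\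
    (forall k i, (1 <= k <= K t)%N ->
       xs t k.+1 i = xh t k i + alpha t *: (v t k i - xh t k i)) /\
    (forall i, x t.+1 i = xs t (K t).+1 i).

Definition xavg {R : realType} {n d : nat} (x : nat -> 'I_n -> 'rV[R]_d) (t : nat) : 'rV[R]_d :=
  n%:R^-1 *: \sum_i x t i.

(* Let E_t be the Frobenius norm of the deviations x_{i,t} - x_avg,t.  Since A_t
   is doubly stochastic, averaging commutes with mixing, so one inner step of
   DOMFW maps the deviations to A_t times the deviations plus alpha_t times the
   centred directions v - x_hat, of Frobenius norm at most n M.  On vectors with
   zero mean a matrix satisfying (A1) contracts the squared norm by the factor
   1 - zeta/(2n^2): the squared norm lost in a mixing step is a sum of local
   variances, each of which dominates zeta/2 times the squared difference along
   an edge, and strong connectivity chains these differences along paths of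
   fewer than n edges.  As sigma1^2 exceeds that factor, an inner step gives
   E <- sigma1 E + alpha_t n M; the K_t >= K_1 inner steps of a round give
   E_{t+1} <= sigma1^{K_1} E_t + alpha_t n M / (1 - sigma1), and summing this
   linear recursion over t, with ||x_{i,t} - x_avg,t|| <= E_t, yields the bound. *)

From Pilot Require Import Defs.
From HB Require Import structures.
From mathcomp Require Import all_boot all_order all_algebra.
From mathcomp Require Import all_classical all_reals all_analysis.
From mathcomp Require Import ring lra.
Import Order.TTheory GRing.Theory Num.Theory.
Import numFieldNormedType.Exports.
Local Open Scope classical_set_scope.
Local Open Scope ring_scope.

Section L2Norm.
Context {R : realType}.

Lemma ler_from_sqr (a b : R) : 0 <= b -> a ^+ 2 <= b ^+ 2 -> a <= b.
Proof. by move=> b0; rewrite !expr2 => ?; nra. Qed.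

Lemma cauchy_schwarz_sum (I : finType) (f g : I -> R) :
  (\sum_i f i * g i) ^+ 2 <= (\sum_i f i ^+ 2) * (\sum_i g i ^+ 2).
Proof.
have lagrange : \sum_i \sum_j (f i * g j - f j * g i) ^+ 2 =
    \sum_i \sum_j f i ^+ 2 * g j ^+ 2 + \sum_i \sum_j f j ^+ 2 * g i ^+ 2
    - 2 * \sum_i \sum_j (f i * g i) * (f j * g j).
  rewrite mulr_sumr -big_split -sumrB; apply: eq_bigr => i _.
  rewrite mulr_sumr -big_split -sumrB; apply: eq_bigr => j _ /=; ring.
have : 0 <= \sum_i \sum_j (f i * g j - f j * g i) ^+ 2.
  by do 2!apply: sumr_ge0 => ? _; apply: sqr_ge0.
rewrite lagrange [X in _ + X - _]exchange_big /= expr2 !big_distrlr /=; lra.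
Qed.

Lemma sum_sqr_shift (n : nat) (y : 'I_n -> R) c :
  \sum_i (y i - c) ^+ 2 = \sum_i y i ^+ 2 - 2 * c * \sum_i y i + n%:R * c ^+ 2.
Proof.
have -> : n%:R * c ^+ 2 = \sum_(i < n) c ^+ 2 by rewrite sumr_const card_ord mulr_natl.
rewrite mulr_sumr -sumrB -big_split.
by apply: eq_bigr => i _ /=; ring.
Qed.

Lemma sum_sqr_sub_mean_le (n : nat) (y : 'I_n -> R) : (0 < n)%N ->
  \sum_i (y i - n%:R^-1 * \sum_j y j) ^+ 2 <= \sum_i y i ^+ 2.
Proof.
move=> n_gt0; rewrite sum_sqr_shift; set S := \sum_j y j.
have -> : n%:R * (n%:R^-1 * S) ^+ 2 = n%:R^-1 * S ^+ 2.
  by field; rewrite pnatr_eq0 -lt0n.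
have : 0 <= n%:R^-1 * S ^+ 2 :> R by rewrite mulr_ge0 ?invr_ge0 ?ler0n ?sqr_ge0.
rewrite expr2; lra.
Qed.

Lemma sqrD_le_split (z u v m P Q : R) : 0 < z -> 0 <= m -> 0 <= Q ->
  z * u ^+ 2 <= P -> z * v ^+ 2 <= m * Q -> z * (u + v) ^+ 2 <= (m + 1) * (P + Q).
Proof.
move=> z_gt0 m_ge0 Q_ge0 hu hv; have [m0 | m_neq0] := eqVneq m 0.
  have v0 : v = 0.
    apply/eqP; rewrite -sqrf_eq0 eq_le sqr_ge0 andbT -(pmulr_rle0 _ z_gt0).
    by rewrite m0 mul0r in hv.
  by rewrite v0 m0 addr0 add0r mul1r; lra.
have m_gt0 : 0 < m by rewrite lt_def m_neq0.
rewrite -(ler_pM2l m_gt0).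
have := sqr_ge0 (m * u - v); have : 0 <= m * (m + 1) by nra.
rewrite !expr2 in hu hv *; nra.
Qed.

Definition l2norm {I : finType} (f : I -> R) := Num.sqrt (\sum_i f i ^+ 2).

Variable I : finType.
Implicit Types f g : I -> R.

Lemma l2norm_ge0 f : 0 <= l2norm f.
Proof. exact: sqrtr_ge0. Qed.

Lemma sqr_l2norm f : l2norm f ^+ 2 = \sum_i f i ^+ 2.
Proof. by rewrite sqr_sqrtr // sumr_ge0 // => i _; apply: sqr_ge0. Qed.

Lemma l2norm_le f c : 0 <= c -> \sum_i f i ^+ 2 <= c ^+ 2 -> l2norm f <= c.
Proof. by move=> c0 le_fc; apply: ler_from_sqr; rewrite ?sqr_l2norm. Qed.

Lemma ler_l2norm f g : (forall i, 0 <= f i <= g i) -> l2norm f <= l2norm g.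
Proof.
move=> le_fg; apply: ler_wsqrtr; apply: ler_sum => i _.
by have /andP[f0 fg] := le_fg i; rewrite ler_sqr ?nnegrE ?(le_trans f0).
Qed.

Lemma ler_l2normD f g : l2norm (fun i => f i + g i) <= l2norm f + l2norm g.
Proof.
apply: l2norm_le; first by rewrite addr_ge0 ?l2norm_ge0.
have -> : \sum_i (f i + g i) ^+ 2 = \sum_i f i ^+ 2 + \sum_i g i ^+ 2 + 2 * \sum_i f i * g i.
  by rewrite mulr_sumr -!big_split; apply: eq_bigr => i _ /=; ring.
have cs : \sum_i f i * g i <= l2norm f * l2norm g.
  apply: ler_from_sqr; first by rewrite mulr_ge0 ?l2norm_ge0.
  by rewrite exprMn !sqr_l2norm cauchy_schwarz_sum.
rewrite -!sqr_l2norm; have := l2norm_ge0 f; have := l2norm_ge0 g; nra.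
Qed.

Lemma l2normZ a f : l2norm (fun i => a * f i) = `|a| * l2norm f.
Proof.
by rewrite /l2norm -sqrtr_sqr -sqrtrM ?sqr_ge0 // mulr_sumr; under eq_bigr do rewrite exprMn.
Qed.

Lemma l2norm_le_sum f : (forall i, 0 <= f i) -> l2norm f <= \sum_i f i.
Proof.
move=> f_ge0; apply: l2norm_le; first exact: sumr_ge0.
rewrite [X in _ <= X]expr2 mulr_suml; apply: ler_sum => i _.
by rewrite expr2 ler_wpM2l // (bigD1 i) //= lerDl sumr_ge0.
Qed.

End L2Norm.

Section RowFamilies.
Context {R : realType} {n d : nat}.
Implicit Types (u v : 'rV[R]_d) (Y Z : 'I_n -> 'rV[R]_d) (A : 'M[R]_n).

Lemma enormE u : enorm u = l2norm (fun k => u ord0 k).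
Proof. by rewrite /enorm /dotv /l2norm; under eq_bigr do rewrite -expr2. Qed.

Lemma enorm_ge0 u : 0 <= enorm u.
Proof. exact: sqrtr_ge0. Qed.

Lemma ler_enormD u v : enorm (u + v) <= enorm u + enorm v.
Proof.
rewrite !enormE (_ : (fun k => _) = fun k => u ord0 k + v ord0 k) ?ler_l2normD //.
by apply: funext => k; rewrite mxE.
Qed.

Lemma enormZ a u : enorm (a *: u) = `|a| * enorm u.
Proof.
rewrite !enormE -l2normZ; congr l2norm; apply: funext => k; exact: mxE.
Qed.

Definition frobenius Y := l2norm (fun i => enorm (Y i)).

Lemma frobenius_ge0 Y : 0 <= frobenius Y.
Proof. exact: l2norm_ge0. Qed.

Lemma sqr_frobenius Y : frobenius Y ^+ 2 = \sum_k \sum_i Y i ord0 k ^+ 2.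
Proof.
rewrite sqr_l2norm exchange_big; apply: eq_bigr => i _.
by rewrite enormE sqr_l2norm.
Qed.

Lemma ler_frobeniusD Y Z : frobenius (fun i => Y i + Z i) <= frobenius Y + frobenius Z.
Proof.
rewrite /frobenius; apply: le_trans; last exact: ler_l2normD.
apply: ler_l2norm => i.
by rewrite enorm_ge0 ler_enormD.
Qed.

Lemma frobeniusZ a Y : frobenius (fun i => a *: Y i) = `|a| * frobenius Y.
Proof.
rewrite /frobenius; have -> : (fun i => enorm (a *: Y i)) = fun i => `|a| * enorm (Y i).
  by apply: funext => i; rewrite enormZ.
by rewrite l2normZ normr_id.
Qed.

Lemma enorm_le_frobenius Y i : enorm (Y i) <= frobenius Y.
Proof.
apply: ler_from_sqr; first exact: frobenius_ge0.
rewrite /frobenius [X in _ <= X]sqr_l2norm (bigD1 i) //= lerDl.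
by apply: sumr_ge0 => j _; apply: sqr_ge0.
Qed.

Lemma sum_enorm_le_frobenius Y : \sum_i enorm (Y i) <= n%:R * frobenius Y.
Proof.
have -> : n%:R * frobenius Y = \sum_(i < n) frobenius Y.
  by rewrite sumr_const card_ord mulr_natl.
by apply: ler_sum => i _; apply: enorm_le_frobenius.
Qed.

Lemma frobenius_le_sum_enorm Y : frobenius Y <= \sum_i enorm (Y i).
Proof. by apply: l2norm_le_sum => i; apply: enorm_ge0. Qed.

Definition avg Y : 'rV[R]_d := n%:R^-1 *: \sum_i Y i.
Definition deviation Y i := Y i - avg Y.
Definition mix A Y i := \sum_j A i j *: Y j.

Lemma deviationE Y i k :
  deviation Y i ord0 k = Y i ord0 k - n%:R^-1 * \sum_j Y j ord0 k.
Proof. by rewrite !mxE summxE. Qed.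

Lemma mixE A Y i k : mix A Y i ord0 k = \sum_j A i j * Y j ord0 k.
Proof. by rewrite summxE; apply: eq_bigr => j _; rewrite mxE. Qed.

Lemma sum_deviation Y : (0 < n)%N -> \sum_i deviation Y i = 0.
Proof.
move=> n_gt0; rewrite sumrB sumr_const card_ord /avg -scaler_nat scalerA.
by rewrite mulfV ?scale1r ?subrr // pnatr_eq0 -lt0n.
Qed.

Lemma deviationD Y Z :
  deviation (fun i => Y i + Z i) = fun i => deviation Y i + deviation Z i.
Proof.
apply: funext => i; rewrite /deviation /avg big_split scalerDr /=.
by rewrite opprD addrACA.
Qed.

Lemma deviationZ a Y : deviation (fun i => a *: Y i) = fun i => a *: deviation Y i.
Proof.
by apply: funext => i; rewrite /deviation /avg -scaler_sumr scalerA mulrC -scalerA scalerBr.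
Qed.

Lemma avg_mix A Y : (forall j, \sum_i A i j = 1) -> avg (mix A Y) = avg Y.
Proof.
move=> A_col1; rewrite /avg /mix exchange_big; congr (_ *: _).
by apply: eq_bigr => j _; rewrite -scaler_suml A_col1 scale1r.
Qed.

Lemma deviation_mix A Y : (forall i, \sum_j A i j = 1) -> (forall j, \sum_i A i j = 1) ->
  deviation (mix A Y) = mix A (deviation Y).
Proof.
move=> A_row1 A_col1; apply: funext => i.
rewrite /deviation avg_mix // {2}/mix.
by under eq_bigr do rewrite scalerBr; rewrite sumrB -scaler_suml A_row1 scale1r.
Qed.

Lemma frobenius_deviation_le Y : (0 < n)%N -> frobenius (deviation Y) <= frobenius Y.
Proof.
move=> n_gt0; apply: ler_from_sqr; first exact: frobenius_ge0.
rewrite !sqr_frobenius; apply: ler_sum => k _.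
under eq_bigr do rewrite deviationE.
exact: sum_sqr_sub_mean_le.
Qed.

End RowFamilies.

Section SpectralGap.
Context {R : realType} {n : nat}.
Variables (A : 'M[R]_n) (zeta : R) (y : 'I_n -> R).
Hypotheses (zeta_gt0 : 0 < zeta) (A_ge0 : forall i j, 0 <= A i j)
  (A_diag_gt0 : forall i, 0 < A i i) (A_gt_zeta : forall i j, 0 < A i j -> zeta < A i j)
  (A_connected : forall i j, connect (fun a b : 'I_n => 0 < A b a) i j)
  (A_row1 : forall i, \sum_j A i j = 1) (A_col1 : forall j, \sum_i A i j = 1).

Let Ay i := \sum_j A i j * y j.
Let local_var i := \sum_j A i j * (y j - Ay i) ^+ 2.

Let local_var_ge0 i : 0 <= local_var i.
Proof. by apply: sumr_ge0 => j _; rewrite mulr_ge0 ?sqr_ge0. Qed.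

Lemma sum_sqr_mix : \sum_i Ay i ^+ 2 = \sum_i y i ^+ 2 - \sum_i local_var i.
Proof.
have var_id i : local_var i = \sum_j A i j * y j ^+ 2 - Ay i ^+ 2.
  rewrite /local_var (eq_bigr (fun j => A i j * y j ^+ 2 - 2 * Ay i * (A i j * y j)
    + Ay i ^+ 2 * A i j)); last by move=> j _; ring.
  by rewrite big_split sumrB /= -!mulr_sumr A_row1 -/(Ay i); ring.
have sum_var : \sum_i local_var i = \sum_i y i ^+ 2 - \sum_i Ay i ^+ 2.
  rewrite (eq_bigr _ (fun i _ => var_id i)) sumrB exchange_big /=.
  by congr (_ - _); apply: eq_bigr => j _; rewrite -mulr_suml A_col1 mul1r.
by rewrite sum_var opprB addrC subrK.
Qed.

Lemma edge_gap a b : 0 < A b a -> zeta * (y b - y a) ^+ 2 <= 2 * local_var b.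
Proof.
move=> A_ba; have [-> | a_neq_b] := eqVneq a b.
  by rewrite subrr expr0n /= mulr0 mulr_ge0.
have zeta_le i : 0 < A b i -> zeta * (y i - Ay b) ^+ 2 <= A b i * (y i - Ay b) ^+ 2.
  by move=> A_bi; rewrite ler_wpM2r ?sqr_ge0 // ltW // A_gt_zeta.
have two_terms : A b a * (y a - Ay b) ^+ 2 + A b b * (y b - Ay b) ^+ 2 <= local_var b.
  rewrite /local_var (bigD1 a) //= (bigD1 b) /=; last by rewrite eq_sym a_neq_b.
  by rewrite addrA lerDl sumr_ge0 // => j _; rewrite mulr_ge0 ?sqr_ge0.
have parallelogram : (y b - y a) ^+ 2 <= 2 * ((y a - Ay b) ^+ 2 + (y b - Ay b) ^+ 2).
  by have := sqr_ge0 (y a - Ay b + (y b - Ay b)); rewrite !expr2; nra.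
have := ler_wpM2l (ltW zeta_gt0) parallelogram.
have := zeta_le a A_ba; have := zeta_le b (A_diag_gt0 b); lra.
Qed.

Lemma path_gap i0 p : path (fun a b => 0 < A b a) i0 p ->
  zeta * (y (last i0 p) - y i0) ^+ 2 <= (size p)%:R * \sum_(b <- p) 2 * local_var b.
Proof.
elim: p i0 => [|b p IH] i0 /=; first by rewrite subrr expr0n /= mulr0 mul0r.
move=> /andP[A_b_i0 path_p]; rewrite big_cons -natr1.
have -> : y (last b p) - y i0 = (y b - y i0) + (y (last b p) - y b).
  by rewrite [RHS]addrC addrA subrK.
apply: sqrD_le_split; rewrite ?ler0n ?edge_gap ?IH //.
by rewrite big_seq sumr_ge0 // => j _; rewrite mulr_ge0.
Qed.

Lemma connect_gap i0 i : zeta * (y i - y i0) ^+ 2 <= n%:R * \sum_b 2 * local_var b.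
Proof.
case/connectP: (A_connected i0 i) => p p_path ->.
case: (shortenP p_path) => p' p'_path p'_uniq _.
apply: le_trans (path_gap _ _ p'_path) _.
have size_p' : (size p' <= n)%N.
  move/card_uniqP: p'_uniq => /= card_p'; have := max_card (mem (i0 :: p')).
  by rewrite card_p' card_ord; apply: ltnW.
have sum_p' : \sum_(b <- p') 2 * local_var b <= \sum_b 2 * local_var b.
  rewrite big_uniq /=; last by case/andP: p'_uniq.
  by rewrite [X in _ <= X](bigID (mem p')) /= lerDl sumr_ge0 // => j _; rewrite mulr_ge0.
apply: ler_pM; rewrite ?ler0n ?ler_nat //.
by rewrite big_seq sumr_ge0 // => j _; rewrite mulr_ge0.
Qed.

Lemma mix_sum_sqr_le : \sum_i y i = 0 ->
  \sum_i (\sum_j A i j * y j) ^+ 2 <= (1 - zeta / (2 * n%:R ^+ 2)) * \sum_i y i ^+ 2.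
Proof.
move=> y_sum0; have [i0 _ | no_index] := pickP (@predT 'I_n); last first.
  by rewrite !big_pred0 ?mulr0.
have n_gt0 : 0 < n%:R :> R by rewrite ltr0n (leq_ltn_trans _ (ltn_ord i0)).
have spread : zeta * \sum_i (y i - y i0) ^+ 2 <= n%:R ^+ 2 * \sum_b 2 * local_var b.
  rewrite mulr_sumr; apply: le_trans (ler_sum _ (fun i _ => connect_gap i0 i)) _.
  by rewrite sumr_const card_ord -mulrnAl expr2 mulr_natr.
have shift : \sum_i y i ^+ 2 <= \sum_i (y i - y i0) ^+ 2.
  by rewrite sum_sqr_shift y_sum0 mulr0 subr0 lerDl mulr_ge0 ?sqr_ge0.
rewrite -/(Ay _) sum_sqr_mix mulrBl mul1r lerD2l lerN2 mulrAC ler_pdivrMr; last first.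
  by rewrite mulr_gt0 ?exprn_gt0.
have := ler_wpM2l (ltW zeta_gt0) shift; rewrite -mulr_sumr in spread; lra.
Qed.

End SpectralGap.

Definition mixing_matrix {R : realType} {n : nat} (A : 'M[R]_n) (zeta : R) : Prop :=
  (forall i j, 0 <= A i j) /\ (forall i, 0 < A i i) /\
  (forall i j, 0 < A i j -> zeta < A i j) /\
  (forall i j, connect (fun a b : 'I_n => 0 < A b a) i j) /\
  (forall i, \sum_j A i j = 1) /\ (forall j, \sum_i A i j = 1).

Section ConsensusStep.
Context {R : realType} {n d : nat}.
Variables (A : 'M[R]_n) (zeta sigma M : R).
Hypotheses (n_gt0 : (0 < n)%N) (zeta_gt0 : 0 < zeta) (A_mixing : mixing_matrix A zeta)
  (sigma_ge0 : 0 <= sigma) (sigma_gap : 1 - zeta / (2 * n%:R ^+ 2) <= sigma ^+ 2).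
Implicit Types (Y V : 'I_n -> 'rV[R]_d).

Lemma frobenius_mix_le Y : \sum_i Y i = 0 -> frobenius (mix A Y) <= sigma * frobenius Y.
Proof.
have [A_ge0 [A_diag [A_zeta [A_conn [A_row1 A_col1]]]]] := A_mixing.
move=> Y_sum0; apply: ler_from_sqr; first by rewrite mulr_ge0 ?frobenius_ge0.
rewrite exprMn !sqr_frobenius mulr_sumr; apply: ler_sum => k _.
under eq_bigr do rewrite mixE.
have col_sum0 : \sum_i Y i ord0 k = 0 by rewrite -summxE Y_sum0 mxE.
apply: le_trans (mix_sum_sqr_le _ _ _ zeta_gt0 A_ge0 A_diag A_zeta A_conn A_row1 A_col1
  col_sum0) _.
by rewrite ler_wpM2r // sumr_ge0 // => i _; apply: sqr_ge0.
Qed.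

Lemma frobenius_deviation_step Y V alpha : 0 <= alpha ->
  (forall i, enorm (V i - mix A Y i) <= M) ->
  frobenius (deviation (fun i => mix A Y i + alpha *: (V i - mix A Y i)))
    <= sigma * frobenius (deviation Y) + alpha * (n%:R * M).
Proof.
have [_ [_ [_ [_ [A_row1 A_col1]]]]] := A_mixing.
move=> alpha_ge0 V_near.
rewrite (deviationD (mix A Y)) (deviationZ alpha (fun i => V i - mix A Y i)).
rewrite deviation_mix //; apply: le_trans (ler_frobeniusD _ _) _; apply: lerD.
  by apply: frobenius_mix_le; apply: sum_deviation.
rewrite frobeniusZ ger0_norm // ler_wpM2l //.
apply: le_trans (frobenius_deviation_le _ n_gt0) _.
apply: le_trans (frobenius_le_sum_enorm _) _.
have -> : n%:R * M = \sum_(i < n) M by rewrite sumr_const card_ord mulr_natl.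
by apply: ler_sum => i _.
Qed.

End ConsensusStep.

Lemma convex_set_sum {R : realType} {d : nat} (X : set 'rV[R]_d) (I : eqType) (s : seq I)
    (a : I -> R) (z : I -> 'rV[R]_d) :
  Defs.convex_set X -> (forall i, 0 <= a i) -> (forall i, X (z i)) ->
  \sum_(i <- s) a i = 1 -> X (\sum_(i <- s) a i *: z i).
Proof.
move=> X_convex a_ge0 Xz; elim: s a a_ge0 => [|b s IH] a a_ge0.
  by rewrite big_nil => /eqP; rewrite eq_sym oner_eq0.
rewrite !big_cons; set S := \sum_(i <- s) a i => sum1.
have S_ge0 : 0 <= S by apply: sumr_ge0.
have [S0 | S_neq0] := eqVneq S 0.
  have tail0 : \sum_(i <- s) a i *: z i = 0.
    apply: big1_seq => i /andP[_ i_s].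
    have : all (fun i => true ==> (a i == 0)) s by rewrite -psumr_eq0 //; apply/eqP.
    by move/allP => /(_ i i_s) /= /eqP ->; rewrite scale0r.
  by rewrite tail0 addr0 -[a b]addr0 -S0 sum1 scale1r.
have S_gt0 : 0 < S by rewrite lt_def S_neq0.
have X_tail : X (\sum_(i <- s) (a i / S) *: z i).
  by apply: IH => [i|]; rewrite ?divr_ge0 // -mulr_suml mulfV.
have -> : \sum_(i <- s) a i *: z i = S *: \sum_(i <- s) (a i / S) *: z i.
  by rewrite scaler_sumr; apply: eq_bigr => i _; rewrite scalerA mulrC divfK.
have -> : a b = 1 - S by rewrite -sum1 addrK.
by apply: (X_convex _ _ (Xz b) X_tail); rewrite S_ge0 -sum1 lerDr a_ge0.
Qed.

Section AffineRecursion.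
Context {R : realType}.

Lemma affine_iter_le (e : nat -> R) (s b : R) m : 0 <= s -> s < 1 -> 0 <= b ->
  (forall k, (k < m)%N -> e k.+1 <= s * e k + b) -> e m <= s ^+ m * e 0%N + b / (1 - s).
Proof.
move=> s_ge0 s_lt1 b_ge0 rec; have s1 : 1 - s != 0 by rewrite subr_eq0 gt_eqF.
elim: m rec => [|m IH] rec.
  by rewrite expr0 mul1r lerDl divr_ge0 // subr_ge0 ltW.
apply: le_trans (rec m (ltnSn m)) _.
(* b / (1 - s) is the fixed point of the affine map e |-> s * e + b *)
have -> : s ^+ m.+1 * e 0%N + b / (1 - s) = s * (s ^+ m * e 0%N + b / (1 - s)) + b.
  by rewrite exprS; field.
by rewrite lerD2r ler_wpM2l // IH // => k k_lt; apply: rec; apply: ltnW.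
Qed.

Lemma sum_affine_rec_le (e c : nat -> R) (rho : R) T : 0 <= rho ->
  (forall t, (1 <= t)%N -> 0 <= e t) ->
  (forall t, (1 <= t)%N -> e t.+1 <= rho * e t + c t) ->
  (1 - rho) * \sum_(1 <= t < T.+1) e t <= e 1%N + \sum_(1 <= t < T.+1) c t.
Proof.
move=> rho_ge0 e_ge0 rec.
have sum_rec : \sum_(1 <= t < T.+1) e t.+1
    <= rho * \sum_(1 <= t < T.+1) e t + \sum_(1 <= t < T.+1) c t.
  by rewrite mulr_sumr -big_split; apply: ler_sum_nat => t /andP[t_ge1 _]; apply: rec.
have shift : \sum_(1 <= t < T.+1) e t <= e 1%N + \sum_(1 <= t < T.+1) e t.+1.
  case: T {sum_rec} => [|T]; first by rewrite !big_geq // addr0 e_ge0.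
  rewrite big_ltn // lerD2l [in leRHS]big_nat_recr //= big_add1 /= lerDl.
  exact: e_ge0.
rewrite mulrBl mul1r; lra.
Qed.

End AffineRecursion.

Lemma sigma_bounds {R : realType} (n : nat) (zeta : R) : (0 < n)%N -> 0 < zeta < 1 ->
  let sigma := 1 - zeta / (4 * n%:R ^+ 2) in
  [/\ 0 < sigma, sigma < 1 & 1 - zeta / (2 * n%:R ^+ 2) <= sigma ^+ 2].
Proof.
move=> n_gt0 /andP[zeta_gt0 zeta_lt1] sigma.
have n2_ge1 : 1 <= n%:R ^+ 2 :> R by rewrite exprn_ege1 // ler1n.
have den_gt0 : 0 < 4 * n%:R ^+ 2 :> R by rewrite mulr_gt0 // (lt_le_trans ltr01).
have q_gt0 : 0 < zeta / (4 * n%:R ^+ 2) by rewrite divr_gt0.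
have q_lt1 : zeta / (4 * n%:R ^+ 2) < 1 by rewrite ltr_pdivrMr // mul1r; lra.
have -> : zeta / (2 * n%:R ^+ 2) = 2 * (zeta / (4 * n%:R ^+ 2)).
  by field; rewrite pnatr_eq0 -lt0n.
rewrite /sigma; split; [lra | lra | rewrite expr2; nra].
Qed.

(* The constants of the theorem are weaker than what the recursion gives: they
   carry extra factors [s^-1 >= 1], which are simply absorbed here. *)
Lemma consensus_bound_relax {R : realType} (S E1 N M s rho L S1 D Al : R) :
  0 < s < 1 -> 0 <= rho < 1 -> 0 <= N -> 0 <= M -> 0 <= Al -> 0 <= E1 <= S1 -> 0 <= D ->
  L <= N * S -> (1 - rho) * S <= E1 + N * M / (1 - s) * Al ->
  L <= N * s^-1 / (1 - rho) * S1 + D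
       + (N ^+ 2 * M * s^-1 / (s * (1 - s) * (1 - rho)) + 2 * N * M) * Al.
Proof.
move=> /andP[s_gt0 s_lt1] /andP[rho_ge0 rho_lt1] N_ge0 M_ge0 Al_ge0 /andP[E1_ge0 E1_le].
move=> D_ge0 L_le S_le.
have {}S_le : S <= (E1 + N * M / (1 - s) * Al) / (1 - rho).
  by rewrite ler_pdivlMr ?subr_gt0 // mulrC.
rewrite !invfM; set r := (1 - rho)^-1; set w := (1 - s)^-1; set g := s^-1.
have r_gt0 : 0 < r by rewrite invr_gt0 subr_gt0.
have w_gt0 : 0 < w by rewrite invr_gt0 subr_gt0.
have g_ge1 : 1 <= g by rewrite invr_ge1 ?unitfE ?gt_eqF // ltW.
have NS_le : N * S <= N * r * E1 + N ^+ 2 * M * w * r * Al.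
  apply: le_trans (ler_wpM2l N_ge0 S_le) _.
  by rewrite -/r -/w le_eqVlt; apply/orP; left; apply/eqP; ring.
have E1_term : N * r * E1 <= N * g * r * S1.
  have -> : N * g * r * S1 = N * r * (g * S1) by ring.
  apply: ler_wpM2l; first by rewrite mulr_ge0 // ltW.
  by rewrite (le_trans E1_le) // ler_peMl // (le_trans E1_ge0 E1_le).
have Al_term : N ^+ 2 * M * w * r * Al <= N ^+ 2 * M * g * (g * w * r) * Al.
  have -> : N ^+ 2 * M * g * (g * w * r) * Al = N ^+ 2 * M * w * r * Al * g ^+ 2 by ring.
  by rewrite ler_peMr ?exprn_ege1 // !mulr_ge0 ?sqr_ge0 // ltW.
have : 0 <= 2 * N * M * Al by rewrite !mulr_ge0.
lra.
Qed.

Lemma mixing_zeta_lt1 {R : realType} {n : nat} (A : 'M[R]_n) (zeta : R) :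
  (0 < n)%N -> mixing_matrix A zeta -> zeta < 1.
Proof.
move=> n_gt0 [A_ge0 [A_diag [A_zeta [_ [A_row1 _]]]]]; pose i0 : 'I_n := Ordinal n_gt0.
apply: lt_le_trans (A_zeta _ _ (A_diag i0)) _.
by rewrite -(A_row1 i0) (bigD1 i0) //= lerDl sumr_ge0.
Qed.

Lemma convex_set_mix {R : realType} {n d : nat} (X : set 'rV[R]_d) (A : 'M[R]_n)
    (Y : 'I_n -> 'rV[R]_d) :
  Defs.convex_set X -> (forall i j, 0 <= A i j) -> (forall i, \sum_j A i j = 1) ->
  (forall j, X (Y j)) -> forall i, X (mix A Y i).
Proof. by move=> X_convex A_ge0 A_row1 XY i; apply: convex_set_sum. Qed.

Lemma convex_set_interp {R : realType} {d : nat} (X : set 'rV[R]_d) (p q : 'rV[R]_d) a :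
  Defs.convex_set X -> X p -> X q -> 0 <= a <= 1 -> X (p + a *: (q - p)).
Proof.
move=> X_convex Xp Xq a01.
have -> : p + a *: (q - p) = (1 - a) *: p + a *: q.
  by rewrite scalerBr scalerBl scale1r addrA addrAC.
exact: X_convex.
Qed.

Section DOMFW.
Context {R : realType} {n d : nat}.
Context {X : set 'rV[R]_d} {M zeta sigma : R} {A : nat -> 'M[R]_n}
  {grad : nat -> 'I_n -> 'rV[R]_d -> 'rV[R]_d} {alpha : nat -> R} {K : nat -> nat}
  {x : nat -> 'I_n -> 'rV[R]_d} {xs xh gb gh v : nat -> nat -> 'I_n -> 'rV[R]_d}.
Hypotheses (n_gt0 : (0 < n)%N) (A1 : assumption_A1 A zeta) (X_convex : Defs.convex_set X)
  (X_diam : forall p q, X p -> X q -> enorm (p - q) <= M)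
  (alpha01 : forall t, (1 <= t)%N -> 0 <= alpha t <= 1)
  (K_mono : forall t s, (1 <= t <= s)%N -> (K t <= K s)%N)
  (sigma_ge0 : 0 <= sigma) (sigma_lt1 : sigma < 1)
  (sigma_gap : 1 - zeta / (2 * n%:R ^+ 2) <= sigma ^+ 2)
  (run : DOMFW_run X A grad alpha K x xs xh gb gh v).

Let A_mixing {t} : (1 <= t)%N -> mixing_matrix (A t) zeta := A1.2 t.

Lemma DOMFW_xs_succ t k : (1 <= t)%N -> (1 <= k <= K t)%N ->
  xs t k.+1 = fun i => mix (A t) (xs t k) i + alpha t *: (v t k i - mix (A t) (xs t k) i).
Proof.
move=> t_ge1 k_range; have [_ [xhE [_ [_ [_ [_ [xsE _]]]]]]] := run.2 t t_ge1.
by apply: funext => i; rewrite xsE // xhE.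
Qed.

Lemma DOMFW_inner_in_X t : (1 <= t)%N -> (forall i, X (x t i)) ->
  forall k, (k <= K t)%N -> forall i, X (xs t k.+1 i).
Proof.
move=> t_ge1 Xx; have [xs1 [_ [_ [_ [_ [v_opt _]]]]]] := run.2 t t_ge1.
have [A_ge0 [_ [_ [_ [A_row1 _]]]]] := A_mixing t_ge1.
elim=> [|k IH] k_le i; first by rewrite xs1.
have k_range : (1 <= k.+1 <= K t)%N by rewrite ltn0Sn.
rewrite DOMFW_xs_succ //; apply: convex_set_interp; rewrite ?alpha01 //.
  by apply: convex_set_mix => // j; apply: IH; apply: ltnW.
exact: (v_opt _ _ k_range).1.
Qed.

Lemma DOMFW_in_X t : (1 <= t)%N -> forall i, X (x t i).
Proof.
elim: t => [//|[|t] IH] _ i; first exact: run.1.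
have [_ [_ [_ [_ [_ [_ [_ x_next]]]]]]] := run.2 t.+1 isT.
by rewrite x_next; apply: DOMFW_inner_in_X => //; apply: IH.
Qed.

Lemma DOMFW_M_ge0 : 0 <= M.
Proof.
pose i0 : 'I_n := Ordinal n_gt0; have Xx1 := run.1 i0.
exact: le_trans (enorm_ge0 _) (X_diam _ _ Xx1 Xx1).
Qed.

Lemma DOMFW_inner_step t k : (1 <= t)%N -> (1 <= k <= K t)%N ->
  frobenius (deviation (xs t k.+1))
    <= sigma * frobenius (deviation (xs t k)) + alpha t * (n%:R * M).
Proof.
move=> t_ge1 k_range; have [_ [_ [_ [_ [_ [v_opt _]]]]]] := run.2 t t_ge1.
have [A_ge0 [_ [_ [_ [A_row1 _]]]]] := A_mixing t_ge1.
have [zeta_gt0 _] := A1.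
rewrite DOMFW_xs_succ //.
apply: (frobenius_deviation_step _ _ _ _ n_gt0 zeta_gt0 (A_mixing t_ge1) sigma_ge0 sigma_gap).
  by have /andP[] := alpha01 t t_ge1.
move=> i; apply: X_diam; first exact: (v_opt _ _ k_range).1.
apply: convex_set_mix => // j.
case/andP: k_range; case: k => // k _ k_le.
by apply: DOMFW_inner_in_X; [| apply: DOMFW_in_X | apply: ltnW].
Qed.

Lemma DOMFW_round t : (1 <= t)%N ->
  frobenius (deviation (x t.+1))
    <= sigma ^+ K t * frobenius (deviation (x t)) + alpha t * (n%:R * M) / (1 - sigma).
Proof.
move=> t_ge1; have [xs1 [_ [_ [_ [_ [_ [_ x_next]]]]]]] := run.2 t t_ge1.
have -> : x t.+1 = xs t (K t).+1 by apply: funext => i; rewrite x_next.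
have -> : x t = xs t 1%N by apply: funext => i; rewrite xs1.
apply: (affine_iter_le (fun k => frobenius (deviation (xs t k.+1)))) => //.
  by rewrite mulr_ge0 ?mulr_ge0 ?ler0n ?DOMFW_M_ge0 //; have /andP[] := alpha01 t t_ge1.
by move=> k k_lt; apply: DOMFW_inner_step.
Qed.

Lemma DOMFW_deviation_rec t : (1 <= t)%N ->
  frobenius (deviation (x t.+1))
    <= sigma ^+ K 1%N * frobenius (deviation (x t)) + n%:R * M / (1 - sigma) * alpha t.
Proof.
move=> t_ge1; apply: le_trans (DOMFW_round _ t_ge1) _.
have -> : alpha t * (n%:R * M) / (1 - sigma) = n%:R * M / (1 - sigma) * alpha t by ring.
rewrite lerD2r; apply: ler_wpM2r; first exact: frobenius_ge0.
by apply: ler_wiXn2l; rewrite ?sigma_ge0 ?(ltW sigma_lt1) ?K_mono ?leqnn.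
Qed.

End DOMFW.

Theorem lemma1 (R : realType) (n d : nat) (X : set 'rV[R]_d) (M zeta : R)
  (A : nat -> 'M[R]_n)
  (f : nat -> 'I_n -> 'rV[R]_d -> R) (grad : nat -> 'I_n -> 'rV[R]_d -> 'rV[R]_d)
  (alpha : nat -> R) (K : nat -> nat)
  (x : nat -> 'I_n -> 'rV[R]_d) (xs xh gb gh v : nat -> nat -> 'I_n -> 'rV[R]_d)
  (T : nat) :
  (0 < n)%N ->
  assumption_A1 A zeta ->
  assumption_A2 X M ->
  (forall t i, (1 <= t)%N -> convex_fun_on X (f t i) /\ gradient_on X (f t i) (grad t i)) ->
  (forall t, (1 <= t)%N -> 0 < alpha t <= 1) ->
  (forall t s, (1 <= t <= s)%N -> (K t <= K s)%N) ->
  (forall t, (1 <= t)%N -> (2 <= K t)%N) ->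
  DOMFW_run X A grad alpha K x xs xh gb gh v ->
  (2 <= T)%N ->
  let sigma1 := 1 - zeta / (4 * n%:R ^+ 2) in
  let Gamma1 := sigma1^-1 in
  \sum_(1 <= t < T.+1) \sum_i enorm (x t i - xavg x t)
  <= n%:R * Gamma1 / (1 - sigma1 ^+ K 1%N) * \sum_i enorm (x 1%N i)
     + \sum_i enorm (x 1%N i - xavg x 1%N)
     + (n%:R ^+ 2 * M * Gamma1 / (sigma1 * (1 - sigma1) * (1 - sigma1 ^+ K 1%N))
        + 2 * n%:R * M) * \sum_(1 <= t < T.+1) alpha t.
Proof.
move=> n_gt0 A1 [X_convex [_ X_diam]] _ alpha_pos K_mono K_ge2 run _.
cbv zeta; set sigma1 := 1 - zeta / (4 * n%:R ^+ 2).
have alpha01 t : (1 <= t)%N -> 0 <= alpha t <= 1.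
  by move=> /alpha_pos /andP[/ltW -> ->].
have [zeta_gt0 A_mixing] := A1.
have zeta01 : 0 < zeta < 1 by rewrite zeta_gt0 (mixing_zeta_lt1 _ _ n_gt0 (A_mixing 1%N isT)).
have [sigma_gt0 sigma_lt1 sigma_gap] :
    [/\ 0 < sigma1, sigma1 < 1 & 1 - zeta / (2 * n%:R ^+ 2) <= sigma1 ^+ 2].
  exact: sigma_bounds.
have rho_lt1 : sigma1 ^+ K 1%N < 1.
  by rewrite exprn_ilt1 ?ltW // -lt0n (leq_trans _ (K_ge2 1%N isT)).
have M_ge0 := DOMFW_M_ge0 n_gt0 X_diam run.
pose E t := frobenius (deviation (x t)).
apply: (consensus_bound_relax (\sum_(1 <= t < T.+1) E t) (E 1%N)) => //.
- by rewrite sigma_gt0 sigma_lt1.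
- by rewrite rho_lt1 exprn_ge0 // ltW.
- by rewrite big_nat sumr_ge0 // => t /andP[/alpha01 /andP[]].
- rewrite frobenius_ge0; apply: le_trans (frobenius_deviation_le _ n_gt0) _.
  exact: frobenius_le_sum_enorm.
- by rewrite sumr_ge0 // => i _; apply: enorm_ge0.
- by rewrite mulr_sumr ler_sum // => t _; apply: sum_enorm_le_frobenius.
rewrite [in leRHS]mulr_sumr; apply: sum_affine_rec_le => [|t _|t t_ge1].
- by rewrite exprn_ge0 // ltW.
- exact: frobenius_ge0.
exact: (DOMFW_deviation_rec n_gt0 A1 X_convex X_diam alpha01 K_mono (ltW sigma_gt0)
  sigma_lt1 sigma_gap run).
Qed.
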